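(* Let $\gamma_a,\gamma_s>0$, $\sigma_B>0$, $q>0$, $\lambda>0$, $\varepsilon_a\in(0,2)$, and let $\beta_s$ be the piecewise linear coalbedo described in the context. Then the system \[ \gamma_a T_a'=-\lambda(T_a-T_s)+\varepsilon_a\sigma_B|T_s|^3T_s-2\varepsilon_a\sigma_B|T_a|^3T_a,\qquad \gamma_s T_s'=-\lambda(T_s-T_a)-\sigma_B|T_s|^3T_s+\varepsilon_a\sigma_B|T_a|^3T_a+q\beta_s(T_s) \] has at least one equilibrium point.
   Context: The coalbedo is $\beta_s(T)=\beta_{s,-}$ for $T\le T_{s,-}$, $\beta_s(T)=\beta_{s,-}+(\beta_{s,+}-\beta_{s,-})\frac{T-T_{s,-}}{T_{s,+}-T_{s,-}}$ for $T\in[T_{s,-},T_{s,+}]$, and $\beta_s(T)=\beta_{s,+}$ for $T\ge T_{s,+}$, where $T_{s,+}>T_{s,-}>0$ and $\beta_{s,+}>\beta_{s,-}>0$. An equilibrium point is a point $(T_a,T_s)\in[0,\infty)^2$ at which both right-hand sides vanish. *)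

From Stdlib Require Import Reals.
Open Scope R_scope.

Definition coalbedo (Tm Tp bm bp T : R) : R :=
  if Rle_dec T Tm then bm
  else if Rle_dec Tp T then bp
  else bm + (bp - bm) * ((T - Tm) / (Tp - Tm)).

(* Right-hand sides of the two-layer energy balance system
   gamma_a Ta' = rhs_a, gamma_s Ts' = rhs_s. *)
Definition rhs_a (lam epsa sigB Ta Ts : R) : R :=
  - lam * (Ta - Ts) + epsa * sigB * (Rabs Ts ^ 3 * Ts)
  - 2 * epsa * sigB * (Rabs Ta ^ 3 * Ta).

Definition rhs_s (lam epsa sigB q Tm Tp bm bp Ta Ts : R) : R :=
  - lam * (Ts - Ta) - sigB * (Rabs Ts ^ 3 * Ts)
  + epsa * sigB * (Rabs Ta ^ 3 * Ta) + q * coalbedo Tm Tp bm bp Ts.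

(* Put k_c(T) = lam T + c |T|^3 T, a continuous increasing bijection of R.  The first
   equation says k_{eps sigB}(Ts) = k_{2 eps sigB}(Ta), so its solutions form the graph of
   the continuous function h = k_{eps sigB}^-1 o k_{2 eps sigB}, with h(0) = 0 and h >= 0
   on [0, oo).  Along this graph the second right-hand side equals q beta_s(0) > 0 at
   Ta = 0.  For Ta >= 0 the first equation forces Ta^4 <= Ts^4 <= 2 Ta^4, and adding the
   two right-hand sides gives
     rhs_s = q beta_s(Ts) - eps sigB Ta^4 - (1 - eps) sigB Ts^4
           <= q beta_{s,+} - (2 - eps)/2 sigB Ta^4,
   which is negative for large Ta.  The intermediate value theorem gives the zero. *)
From Stdlib Require Import Reals Lra Psatz Ranalysis5 ClassicalEpsilon.
Open Scope R_scope.

Definition signed_quartic (x : R) : R := Rabs x ^ 3 * x.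

Lemma continuity_signed_quartic : continuity signed_quartic.
Proof. unfold signed_quartic; reg. Qed.

Lemma signed_quartic_nonneg x : 0 <= x -> signed_quartic x = x ^ 4.
Proof. intros Hx; unfold signed_quartic; rewrite Rabs_right by lra; ring. Qed.

Lemma signed_quartic_opp x : signed_quartic (- x) = - signed_quartic x.
Proof. unfold signed_quartic; rewrite Rabs_Ropp; ring. Qed.

Lemma signed_quartic_nonpos x : x <= 0 -> signed_quartic x = - (- x) ^ 4.
Proof. intros Hx; unfold signed_quartic; rewrite Rabs_left1 by lra; ring. Qed.

Lemma signed_quartic_le x y : x <= y -> signed_quartic x <= signed_quartic y.
Proof.
  intros Hxy.
  destruct (Rle_lt_dec 0 x) as [Hx | Hx].
  - rewrite !signed_quartic_nonneg by lra; apply pow_incr; lra.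
  - rewrite (signed_quartic_nonpos x) by lra.
    destruct (Rle_lt_dec y 0) as [Hy | Hy].
    + rewrite signed_quartic_nonpos by lra.
      apply Ropp_le_contravar, pow_incr; lra.
    + rewrite signed_quartic_nonneg by lra.
      pose proof (pow_le (- x) 4); pose proof (pow_le y 4); lra.
Qed.

Section IncreasingInverse.

Variable f : R -> R.
Hypothesis f_cont : continuity f.
Hypothesis f_incr : forall x y, x < y -> f x < f y.
Hypothesis f_surj : forall s, exists x, f x = s.

Definition increasing_inverse (s : R) : R := epsilon (inhabits 0) (fun x => f x = s).

Lemma increasing_inverseK s : f (increasing_inverse s) = s.
Proof. exact (epsilon_spec (inhabits 0) (fun x => f x = s) (f_surj s)). Qed.

Lemma increasing_le_reflect x y : f x <= f y -> x <= y.
Proof.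
  intros Hf; destruct (Rle_lt_dec x y) as [| Hyx]; [easy |].
  specialize (f_incr y x Hyx); lra.
Qed.

Lemma continuity_increasing_inverse : continuity increasing_inverse.
Proof.
  intros s; set (x := increasing_inverse s).
  assert (Hs : f (x - 1) < s < f (x + 1)).
  { unfold x; rewrite <- (increasing_inverseK s) at 2 3; split; apply f_incr; lra. }
  apply (continuity_pt_recip_interv f _ (x - 1) (x + 1)); [lra | | | | | exact Hs].
  - intros a b _ Hab _; exact (f_incr a b Hab).
  - intros t _ _; apply increasing_inverseK.
  - intros t Hlo Hhi; rewrite <- (increasing_inverseK t) in Hlo, Hhi.
    split; apply increasing_le_reflect; lra.
  - intros a _; apply f_cont.
Qed.

End IncreasingInverse.

Definition linear_plus_quartic (a c y : R) : R := a * y + c * signed_quartic y.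

Section LinearPlusQuartic.

Variables a c : R.
Hypothesis a_pos : 0 < a.
Hypothesis c_nonneg : 0 <= c.

Lemma continuity_linear_plus_quartic : continuity (linear_plus_quartic a c).
Proof.
  apply continuity_plus; [reg |].
  apply continuity_scal, continuity_signed_quartic.
Qed.

Lemma linear_plus_quartic_incr x y :
  x < y -> linear_plus_quartic a c x < linear_plus_quartic a c y.
Proof.
  intros Hxy; unfold linear_plus_quartic.
  pose proof (signed_quartic_le x y (Rlt_le _ _ Hxy)); nra.
Qed.

Lemma linear_plus_quartic0 : linear_plus_quartic a c 0 = 0.
Proof. unfold linear_plus_quartic, signed_quartic; rewrite Rabs_R0; ring. Qed.

Lemma linear_plus_quartic_nonneg x : 0 <= x -> 0 <= linear_plus_quartic a c x.
Proof.
  intros Hx; unfold linear_plus_quartic; rewrite signed_quartic_nonneg by easy.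
  pose proof (pow_le x 4 Hx); nra.
Qed.

Lemma linear_plus_quartic_surj s : exists y, linear_plus_quartic a c y = s.
Proof.
  set (M := Rabs s / a + 1).
  assert (HaM : a * M = Rabs s + a) by (unfold M; field; lra).
  assert (HM : 0 < M) by (pose proof (Rabs_pos s); nra).
  assert (Hup : a * M <= linear_plus_quartic a c M).
  { unfold linear_plus_quartic; rewrite signed_quartic_nonneg by lra.
    pose proof (pow_le M 4 (Rlt_le _ _ HM)); nra. }
  assert (Hodd : linear_plus_quartic a c (- M) = - linear_plus_quartic a c M).
  { unfold linear_plus_quartic; rewrite signed_quartic_opp; ring. }
  destruct (f_interv_is_interv (linear_plus_quartic a c) (- M) M s) as [y [_ Hy]].
  - lra.
  - rewrite Hodd; split_Rabs; lra.
  - intros x _; apply continuity_linear_plus_quartic.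
  - exists y; exact Hy.
Qed.

End LinearPlusQuartic.

Section Coalbedo.

Variables Tm Tp bm bp : R.
Hypothesis Tm_lt_Tp : Tm < Tp.

(* [(|u| - |u - 1| + 1) / 2] is [u] clamped to [[0, 1]]. *)
Lemma coalbedo_clampE T :
  coalbedo Tm Tp bm bp T =
  bm + (bp - bm) * ((Rabs ((T - Tm) / (Tp - Tm)) - Rabs ((T - Tm) / (Tp - Tm) - 1) + 1) / 2).
Proof.
  unfold coalbedo; set (u := (T - Tm) / (Tp - Tm)).
  assert (Hu : u * (Tp - Tm) = T - Tm) by (unfold u; field; lra).
  destruct (Rle_dec T Tm) as [Hcold | Hcold]; [| destruct (Rle_dec Tp T) as [Hwarm | Hwarm]].
  - assert (u <= 0) by nra.
    rewrite (Rabs_left1 u), (Rabs_left1 (u - 1)) by lra; field.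
  - assert (1 <= u) by nra.
    rewrite (Rabs_right u), (Rabs_right (u - 1)) by lra; field.
  - assert (0 <= u <= 1) by (apply Rnot_le_lt in Hcold, Hwarm; nra).
    rewrite (Rabs_right u), (Rabs_left1 (u - 1)) by lra; field.
Qed.

Lemma continuity_coalbedo : continuity (coalbedo Tm Tp bm bp).
Proof.
  intros T.
  apply (continuity_pt_locally_ext
           (fun T => bm + (bp - bm) * ((Rabs ((T - Tm) / (Tp - Tm))
                                        - Rabs ((T - Tm) / (Tp - Tm) - 1) + 1) / 2))
           _ 1 T Rlt_0_1).
  - intros y _; symmetry; apply coalbedo_clampE.
  - reg.
Qed.

Lemma coalbedo_le_max : bm <= bp -> forall T, coalbedo Tm Tp bm bp T <= bp.
Proof.
  intros Hb T; rewrite coalbedo_clampE.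
  set (u := (T - Tm) / (Tp - Tm)).
  assert (Hu : Rabs u - Rabs (u - 1) <= 1).
  { pose proof (Rabs_triang (u - 1) 1); replace (u - 1 + 1) with u in * by ring.
    rewrite Rabs_R1 in *; lra. }
  nra.
Qed.

End Coalbedo.

Lemma coalbedo_cold Tm Tp bm bp T : T <= Tm -> coalbedo Tm Tp bm bp T = bm.
Proof. intros HT; unfold coalbedo; destruct (Rle_dec T Tm); [easy | lra]. Qed.

Section Equilibria.

Variables lam epsa sigB q Tm Tp bm bp : R.

Lemma rhs_aE Ta Ts :
  rhs_a lam epsa sigB Ta Ts =
  linear_plus_quartic lam (epsa * sigB) Ts - linear_plus_quartic lam (2 * epsa * sigB) Ta.
Proof. unfold rhs_a, linear_plus_quartic, signed_quartic; ring. Qed.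

Lemma rhs_sE Ta Ts :
  rhs_s lam epsa sigB q Tm Tp bm bp Ta Ts =
  linear_plus_quartic lam (epsa * sigB) Ta
  + (q * coalbedo Tm Tp bm bp Ts - linear_plus_quartic lam sigB Ts).
Proof. unfold rhs_s, linear_plus_quartic, signed_quartic; ring. Qed.

Lemma continuity_rhs_s_along (h : R -> R) : Tm < Tp -> continuity h ->
  continuity (fun x => rhs_s lam epsa sigB q Tm Tp bm bp x (h x)).
Proof.
  intros HT Hh x.
  apply (continuity_pt_locally_ext
           (fun x => linear_plus_quartic lam (epsa * sigB) x
                     + (q * coalbedo Tm Tp bm bp (h x) - linear_plus_quartic lam sigB (h x)))
           _ 1 x Rlt_0_1).
  - intros y _; symmetry; apply rhs_sE.
  - apply continuity_plus; [apply continuity_linear_plus_quartic |].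
    apply continuity_minus; [apply continuity_scal |];
      apply (continuity_comp h); auto using continuity_coalbedo, continuity_linear_plus_quartic.
Qed.

Hypothesis lam_pos : 0 < lam.
Hypothesis epsa_pos : 0 < epsa.
Hypothesis sigB_pos : 0 < sigB.

Lemma rhs_a_root_bounds Ta Ts : 0 <= Ta -> 0 <= Ts ->
  rhs_a lam epsa sigB Ta Ts = 0 -> Ta <= Ts /\ Ts ^ 4 <= 2 * Ta ^ 4.
Proof.
  intros HTa HTs; unfold rhs_a.
  fold (signed_quartic Ta) (signed_quartic Ts).
  rewrite !signed_quartic_nonneg by easy.
  intros Hroot.
  pose proof (Rmult_lt_0_compat _ _ epsa_pos sigB_pos) as Hes.
  assert (Hle : Ta <= Ts).
  { destruct (Rle_lt_dec Ta Ts) as [| Hlt]; [easy |].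
    pose proof (pow_incr Ts Ta 4 (conj HTs (Rlt_le _ _ Hlt))).
    pose proof (pow_le Ta 4 HTa); nra. }
  split; [exact Hle |].
  pose proof (pow_le Ta 4 HTa); nra.
Qed.

Lemma rhs_a_root_curve : exists h : R -> R,
  continuity h /\ h 0 = 0 /\ (forall x, 0 <= x -> 0 <= h x) /\
  (forall x, rhs_a lam epsa sigB x (h x) = 0).
Proof.
  pose proof (Rmult_lt_0_compat _ _ epsa_pos sigB_pos) as Hes.
  set (g := linear_plus_quartic lam (epsa * sigB)).
  set (f := linear_plus_quartic lam (2 * epsa * sigB)).
  assert (Hg_incr : forall x y, x < y -> g x < g y) by (apply linear_plus_quartic_incr; lra).
  assert (Hg_surj : forall s, exists y, g y = s) by (apply linear_plus_quartic_surj; lra).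
  assert (Hg0 : g 0 = 0) by apply linear_plus_quartic0.
  set (h := fun x => increasing_inverse g (f x)).
  assert (Hgh : forall x, g (h x) = f x) by (intros x; apply increasing_inverseK, Hg_surj).
  assert (Hh_nonneg : forall x, 0 <= x -> 0 <= h x).
  { intros x Hx; apply (increasing_le_reflect g Hg_incr).
    rewrite Hg0, Hgh; apply linear_plus_quartic_nonneg; lra. }
  exists h; repeat split.
  - apply (continuity_comp f (increasing_inverse g)); [apply continuity_linear_plus_quartic |].
    apply continuity_increasing_inverse; [apply continuity_linear_plus_quartic | easy | easy].
  - apply Rle_antisym; [| exact (Hh_nonneg 0 (Rle_refl 0))].
    apply (increasing_le_reflect g Hg_incr).
    rewrite Hg0, Hgh; unfold f; rewrite linear_plus_quartic0; lra.
  - exact Hh_nonneg.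
  - intros x; rewrite rhs_aE; fold g f; rewrite Hgh; ring.
Qed.

Hypothesis epsa_le_2 : epsa <= 2.
Hypothesis q_nonneg : 0 <= q.
Hypothesis Tm_lt_Tp : Tm < Tp.
Hypothesis bm_le_bp : bm <= bp.

(* The constant [(2 - eps) / 2] bounds from below both [1], obtained for [eps <= 1]
   from [Ta <= Ts], and [2 - eps], obtained for [eps > 1] from [Ts^4 <= 2 Ta^4]. *)
Lemma rhs_s_le_on_rhs_a_root Ta Ts : 0 <= Ta -> 0 <= Ts ->
  rhs_a lam epsa sigB Ta Ts = 0 ->
  rhs_s lam epsa sigB q Tm Tp bm bp Ta Ts <= q * bp - sigB * (2 - epsa) / 2 * Ta ^ 4.
Proof.
  intros HTa HTs Hroot.
  destruct (rhs_a_root_bounds Ta Ts HTa HTs Hroot) as [Hle H4].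
  pose proof (pow_incr Ta Ts 4 (conj HTa Hle)) as H4'.
  pose proof (coalbedo_le_max Tm Tp bm bp Tm_lt_Tp bm_le_bp Ts) as Hbeta.
  assert (Hsum : rhs_s lam epsa sigB q Tm Tp bm bp Ta Ts
                 = q * coalbedo Tm Tp bm bp Ts - epsa * sigB * Ta ^ 4
                   - (1 - epsa) * sigB * Ts ^ 4).
  { rewrite <- (Rplus_0_l (rhs_s _ _ _ _ _ _ _ _ _ _)), <- Hroot.
    unfold rhs_a, rhs_s; fold (signed_quartic Ta) (signed_quartic Ts).
    rewrite !signed_quartic_nonneg by easy; ring. }
  rewrite Hsum.
  assert (Hq : q * coalbedo Tm Tp bm bp Ts <= q * bp) by nra.
  pose proof (pow_le Ta 4 HTa) as Ha4.
  assert (Hs : 0 <= sigB * Ta ^ 4) by nra.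
  destruct (Rle_lt_dec epsa 1).
  - assert ((1 - epsa) * sigB * Ta ^ 4 <= (1 - epsa) * sigB * Ts ^ 4).
    { apply Rmult_le_compat_l; [nra | lra]. }
    nra.
  - assert ((epsa - 1) * sigB * Ts ^ 4 <= (epsa - 1) * sigB * (2 * Ta ^ 4)).
    { apply Rmult_le_compat_l; [nra | lra]. }
    nra.
Qed.

End Equilibria.

Lemma exists_large_quartic c d : 0 < c -> exists A, 0 <= A /\ d < c * A ^ 4.
Proof.
  intros Hc; exists (1 + Rabs d / c).
  assert (HdA : c * (1 + Rabs d / c) = c + Rabs d) by (field; lra).
  assert (H1 : 1 <= 1 + Rabs d / c) by (pose proof (Rabs_pos d); nra).
  assert (Hpow : 1 + Rabs d / c <= (1 + Rabs d / c) ^ 4).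
  { rewrite <- (pow_1 (1 + Rabs d / c)) at 1; apply Rle_pow; [exact H1 | lia]. }
  split; [lra |]; pose proof (Rle_abs d); nra.
Qed.

Theorem lemma6p1 (gamma_a gamma_s sigB q lam epsa Tm Tp bm bp : R)
  (hga : 0 < gamma_a) (hgs : 0 < gamma_s) (hsig : 0 < sigB) (hq : 0 < q)
  (hlam : 0 < lam) (heps0 : 0 < epsa) (heps2 : epsa < 2)
  (hTm : 0 < Tm) (hT : Tm < Tp) (hbm : 0 < bm) (hb : bm < bp) :
  exists Ta Ts : R, 0 <= Ta /\ 0 <= Ts /\
    rhs_a lam epsa sigB Ta Ts = 0 /\
    rhs_s lam epsa sigB q Tm Tp bm bp Ta Ts = 0.
Proof.
  destruct (rhs_a_root_curve lam epsa sigB) as [h [Hh_cont [Hh0 [Hh_nonneg Hroot]]]]; try lra.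
  set (G := fun x => rhs_s lam epsa sigB q Tm Tp bm bp x (h x)).
  assert (HG0 : 0 < G 0).
  { unfold G, rhs_s; rewrite Hh0, coalbedo_cold, Rabs_R0 by lra; nra. }
  destruct (exists_large_quartic (sigB * (2 - epsa) / 2) (q * bp)) as [A [HA HqA]]; [nra |].
  assert (HGA : G A < 0).
  { apply (Rle_lt_trans _ (q * bp - sigB * (2 - epsa) / 2 * A ^ 4)); [| lra].
    apply rhs_s_le_on_rhs_a_root; auto; lra. }
  destruct (IVT_cor G 0 A (continuity_rhs_s_along lam epsa sigB q Tm Tp bm bp h hT Hh_cont) HA)
    as [z [Hz HGz]]; [nra |].
  exists z, (h z); repeat split; [lra | apply Hh_nonneg; lra | apply Hroot | exact HGz].
Qed.
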